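(* Let $A=\mathrm{diag}(\mathbf{a})$ with $\mathbf{a}\in\mathbb{R}^n$, $\beta>0$, and $f(\mathbf{z})=\frac12\mathbf{z}^*A\mathbf{z}+\frac{\beta}{2}\sum_k|z_k|^4$ on $\mathbb{CS}^{n-1}$. Then the KL exponent of $\min_{\mathbf{z}\in\mathbb{CS}^{n-1}}f(\mathbf{z})$ is $\frac14$.
   Context: $\mathbb{CS}^{n-1}$ is the unit sphere of $\mathbb{C}^n$. For $\mathbf{y}\in\mathbb{CS}^{n-1}$ let $\lambda(\mathbf{y})=\frac12\mathbf{y}^*A\mathbf{y}+\beta\|\mathbf{y}\|_4^4$ and $\|\mathrm{grad} f(\mathbf{y})\|=\sqrt2\,\big\|\frac12A\mathbf{y}+\beta\,\mathrm{diag}(|y_1|^2,\dots,|y_n|^2)\mathbf{y}-\lambda(\mathbf{y})\mathbf{y}\big\|_2$ (norm of the Riemannian Wirtinger gradient). $\mathbf{z}$ is a stationary point if $\mathrm{grad} f(\mathbf{z})=0$. The Łojasiewicz inequality with exponent $\theta\in(0,\frac12]$ holds at a stationary point $\mathbf{z}$ if there are $\delta_{\mathbf{z}},\eta_{\mathbf{z}}>0$ with $|f(\mathbf{y})-f(\mathbf{z})|^{1-\theta}\le\eta_{\mathbf{z}}\|\mathrm{grad} f(\mathbf{y})\|$ for all $\mathbf{y}\in\mathbb{CS}^{n-1}$ with $\|\mathbf{y}-\mathbf{z}\|<\delta_{\mathbf{z}}$. The KL exponent of the problem is the largest $\theta\in(0,\frac12]$ such that this inequality holds at every stationary point. *)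

From HB Require Import structures.
From mathcomp Require Import all_boot all_order all_algebra.
From mathcomp Require Import complex.
From mathcomp Require Import reals exp.

Set Implicit Arguments.
Unset Strict Implicit.
Unset Printing Implicit Defensive.
Import Order.TTheory GRing.Theory Num.Theory.
Local Open Scope ring_scope.

Section Defs.
Variables (R : realType) (n : nat).

Definition cabs2 (w : R[i]) : R := (complex.Re w) ^+ 2 + (complex.Im w) ^+ 2.

Definition cnorm (y : 'I_n -> R[i]) : R := Num.sqrt (\sum_k cabs2 (y k)).

Definition on_sphere (y : 'I_n -> R[i]) : Prop := \sum_k cabs2 (y k) = 1.

Definition fobj (a : 'I_n -> R) (beta : R) (y : 'I_n -> R[i]) : R :=
  2^-1 * (\sum_k a k * cabs2 (y k)) + beta / 2 * (\sum_k (cabs2 (y k)) ^+ 2).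

Definition lam (a : 'I_n -> R) (beta : R) (y : 'I_n -> R[i]) : R :=
  2^-1 * (\sum_k a k * cabs2 (y k)) + beta * (\sum_k (cabs2 (y k)) ^+ 2).

Definition gvec (a : 'I_n -> R) (beta : R) (y : 'I_n -> R[i]) : 'I_n -> R[i] :=
  fun k => (((2^-1 * a k)%:C)%C + ((beta * cabs2 (y k))%:C)%C - ((lam a beta y)%:C)%C) * y k.

(* norm of the Riemannian Wirtinger gradient: sqrt 2 * || gvec || *)
Definition gradnorm (a : 'I_n -> R) (beta : R) (y : 'I_n -> R[i]) : R :=
  Num.sqrt 2 * cnorm (gvec a beta y).

Definition stationary (a : 'I_n -> R) (beta : R) (z : 'I_n -> R[i]) : Prop :=
  on_sphere z /\ forall k, gvec a beta z k = 0.

Definition KL_at (a : 'I_n -> R) (beta : R) (z : 'I_n -> R[i]) (theta : R) : Prop :=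
  exists delta eta : R, 0 < delta /\ 0 < eta /\
    forall y : 'I_n -> R[i], on_sphere y ->
      cnorm (fun k => y k - z k) < delta ->
      `|fobj a beta y - fobj a beta z| `^ (1 - theta) <= eta * gradnorm a beta y.

Definition KL_valid (a : 'I_n -> R) (beta : R) (theta : R) : Prop :=
  0 < theta <= 2^-1 /\ forall z, stationary a beta z -> KL_at a beta z theta.

Definition KL_exponent_is (a : 'I_n -> R) (beta : R) (theta : R) : Prop :=
  KL_valid a beta theta /\ forall theta', KL_valid a beta theta' -> theta' <= theta.

End Defs.

(* Everything depends on [y] only through [p k = |y k|^2], a point of the
   probability simplex: [fobj] is [fobj_p p], [gvec y k = gap p k * y k] and
   [gradnorm y ^ 2 = 2 * gnorm2_p p = 2 * \sum_k gap p k ^ 2 * p k].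
   Near a stationary [ps] (whose gap vanishes on its support) write [p = ps + d].
   Off the support, the coordinates where [gap ps] is nonzero carry a mass
   [tau1 = O(V)]; on the support [p] is bounded below, so the gap there is
   [O(sqrt V)]; the remaining degenerate coordinates carry a mass [tau0] with
   only [tau0 ^ 3 = O(V)], because their gap is of the order of the whole
   off-support mass.  Since [f y - f z = \sum_k gap ps k * p k + b / 2 * |d|^2
   = O(V + tau0 ^ 2)], we get [|f y - f z| ^ 3 = O(V ^ 2)], i.e. exponent 1/4.
   For [a = (0, 2b, ..., 2b)] the curve [p = (1 - t, t, 0, ...)] leaves the
   stationary point [e_1] with [f - f e_1 = b t^2] and [V = 4 b^2 t^3 (1 - t)],
   so no exponent above 1/4 is valid. *)

From HB Require Import structures.
From mathcomp Require Import all_boot all_order all_algebra.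
From mathcomp Require Import complex.
From mathcomp Require Import reals exp.
From mathcomp Require Import ring lra.

Set Implicit Arguments.
Unset Strict Implicit.
Unset Printing Implicit Defensive.
Import Order.TTheory GRing.Theory Num.Theory.
Local Open Scope ring_scope.

Section FiniteSums.
Variables (R : realFieldType) (I : finType).
Implicit Types (P Q : pred I) (F G : I -> R).

Lemma ler_term_sum P F j :
  (forall i, P i -> 0 <= F i) -> P j -> F j <= \sum_(i | P i) F i.
Proof.
move=> F_ge0 Pj; rewrite (bigD1 j) //= lerDl.
by apply: sumr_ge0 => i /andP[Pi _]; apply: F_ge0.
Qed.

Lemma ler_sum_sub P Q F :
  (forall i, Q i -> 0 <= F i) -> (forall i, P i -> Q i) ->
  \sum_(i | P i) F i <= \sum_(i | Q i) F i.
Proof.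
move=> F_ge0 PQ; rewrite [leRHS](bigID P) /=.
rewrite [X in _ <= X + _](eq_bigl P) => [|i]; last first.
  by case Pi: (P i); rewrite ?andbT ?andbF ?PQ.
by rewrite lerDl; apply: sumr_ge0 => i /andP[Qi _]; apply: F_ge0.
Qed.

Lemma sqr_sum_mul_le P F G :
  (\sum_(i | P i) F i * G i) ^+ 2 <=
  (\sum_(i | P i) F i ^+ 2) * \sum_(i | P i) G i ^+ 2.
Proof.
rewrite -subr_ge0 expr2 !big_distrlr /=.
set A := \sum_(i | P i) _; set B := \sum_(i | P i) _.
suff E : \sum_(i | P i) \sum_(j | P j) (F i * G j - F j * G i) ^+ 2 = 2 * (A - B).
  rewrite -(@pmulr_rge0 _ 2) // -E.
  by apply: sumr_ge0 => i _; apply: sumr_ge0 => j _; apply: sqr_ge0.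
have AC : A = \sum_(i | P i) \sum_(j | P j) F j ^+ 2 * G i ^+ 2.
  by rewrite /A exchange_big.
rewrite mulr2n mulrDl mul1r {2}AC /A /B -!sumrB -!big_split /=.
apply: eq_bigr => i _; rewrite -!sumrB -!big_split /=.
by apply: eq_bigr => j _; ring.
Qed.

Lemma exists_pos_lbound P F :
  (forall i, P i -> 0 < F i) -> exists2 m, 0 < m & forall i, P i -> m <= F i.
Proof.
move=> F_gt0; pose s := \sum_(i | P i) (F i)^-1.
have s_ge0 : 0 <= s by apply: sumr_ge0 => i Pi; rewrite invr_ge0 ltW ?F_gt0.
exists (1 + s)^-1 => [|i Pi]; first by rewrite invr_gt0; lra.
rewrite -[F i]invrK lef_pV2 ?posrE ?invr_gt0 ?F_gt0 //; last lra.
have Fi_le_s : (F i)^-1 <= s.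
  by apply: ler_term_sum Pi => j Pj; rewrite invr_ge0 ltW ?F_gt0.
lra.
Qed.
End FiniteSums.

Lemma expr3_le_of_bound (R : realFieldType) (x A B t C V Vb : R) :
  0 <= x -> 0 <= A -> 0 <= B -> 0 <= t -> 0 <= V <= Vb ->
  x <= A * V + B * t ^+ 2 -> t ^+ 3 <= C * V ->
  x ^+ 3 <= 4 * (A ^+ 3 * Vb + B ^+ 3 * C ^+ 2) * V ^+ 2.
Proof.
move=> x_ge0 A_ge0 B_ge0 t_ge0 /andP[V_ge0 V_le] x_le t3_le.
have AV_ge0 : 0 <= A * V by apply: mulr_ge0.
have Bt_ge0 : 0 <= B * t ^+ 2 by apply: mulr_ge0; rewrite ?sqr_ge0.
have cube_sum (u v : R) : 0 <= u -> 0 <= v -> (u + v) ^+ 3 <= 4 * (u ^+ 3 + v ^+ 3).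
  move=> u_ge0 v_ge0; have : 0 <= (u + v) * (u - v) ^+ 2 by rewrite mulr_ge0 ?sqr_ge0 ?addr_ge0.
  have -> : 4 * (u ^+ 3 + v ^+ 3) = (u + v) ^+ 3 + 3 * ((u + v) * (u - v) ^+ 2) by ring.
  lra.
have V3 : V ^+ 3 <= Vb * V ^+ 2 by rewrite exprS ler_wpM2r ?sqr_ge0.
have t6 : (t ^+ 2) ^+ 3 <= C ^+ 2 * V ^+ 2.
  rewrite -exprM mulnC exprM -exprMn lerXn2r ?nnegrE ?exprn_ge0 //.
  by apply: le_trans t3_le; rewrite exprn_ge0.
have A3 : (A * V) ^+ 3 <= A ^+ 3 * Vb * V ^+ 2.
  by rewrite exprMn -mulrA ler_wpM2l ?exprn_ge0.
have B3 : (B * t ^+ 2) ^+ 3 <= B ^+ 3 * C ^+ 2 * V ^+ 2.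
  by rewrite exprMn -mulrA ler_wpM2l ?exprn_ge0.
have x3 : x ^+ 3 <= (A * V + B * t ^+ 2) ^+ 3 by rewrite lerXn2r ?nnegrE ?addr_ge0.
have := cube_sum _ _ AV_ge0 Bt_ge0; lra.
Qed.

Section SimplexModel.
Variables (R : realFieldType) (I : finType) (a : I -> R) (b : R).
Implicit Types p : I -> R.

Definition fobj_p p := 2^-1 * (\sum_k a k * p k) + b / 2 * (\sum_k p k ^+ 2).
Definition lam_p p := 2^-1 * (\sum_k a k * p k) + b * (\sum_k p k ^+ 2).
Definition gap p k := 2^-1 * a k + b * p k - lam_p p.
Definition gnorm2_p p := \sum_k gap p k ^+ 2 * p k.

Lemma lam_pE p : lam_p p = \sum_k p k * (2^-1 * a k + b * p k).
Proof. by rewrite /lam_p !mulr_sumr -big_split; apply: eq_bigr => k _ /=; ring. Qed.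

Lemma gnorm2_p_ge0 p : (forall k, 0 <= p k) -> 0 <= gnorm2_p p.
Proof. by move=> p_ge0; apply: sumr_ge0 => k _; rewrite mulr_ge0 ?sqr_ge0. Qed.

End SimplexModel.

Section LocalKL.
Variables (R : realFieldType) (I : finType) (a : I -> R) (b : R) (ps : I -> R).
Variables (m hm : R).
Let S : pred I := fun k => ps k != 0.
Let h := gap a b ps.
Hypotheses (b_gt0 : 0 < b) (ps_sum1 : \sum_k ps k = 1).
Hypothesis gap_supp : forall k, S k -> h k = 0.
Hypotheses (m_gt0 : 0 < m) (ps_lb : forall k, S k -> m <= ps k).
Hypotheses (hm_gt0 : 0 < hm) (gap_lb : forall k, h k != 0 -> hm <= `|h k|).

Let Hs : R := \sum_k `|h k|.
Let c : R := \sum_(k | S k) 1.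
(* [delta] keeps [p] above [m / 2] on the support of [ps] and keeps the
   perturbation [r] of the gap below [hm / 2] (see [r_le]). *)
Let delta := Num.min (m / 2) (hm / (2 * (2 * b + Hs))).

Let Hs_ge_gap k : `|h k| <= Hs.
Proof. exact: ler_term_sum. Qed.

Let Hs_ge0 : 0 <= Hs.
Proof. by apply: sumr_ge0 => k _; apply: normr_ge0. Qed.

Let supp_ne : exists j, S j.
Proof.
have [j Sj | S0] := pickP S; first by exists j.
have : \sum_k ps k = 0 by apply: big1 => k _; apply/eqP/negbFE/S0.
by rewrite ps_sum1 => /eqP; rewrite oner_eq0.
Qed.

Let c_ge1 : 1 <= c.
Proof. by have [j Sj] := supp_ne; apply: (ler_term_sum (F := fun _ => 1)) Sj. Qed.

Let delta_gt0 : 0 < delta.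
Proof. by rewrite lt_min !divr_gt0 //; have := Hs_ge0; have := b_gt0; lra. Qed.

Let delta_le_m : delta <= m / 2.
Proof. by rewrite ge_min lexx. Qed.

Let delta_le_hm : (2 * b + Hs) * delta <= hm / 2.
Proof.
have : delta <= hm / (2 * (2 * b + Hs)) by rewrite ge_min lexx orbT.
by rewrite ler_pdivlMr; have := Hs_ge0; have := b_gt0; lra.
Qed.

Let A : R := (Hs + 5 * b) * (4 / hm ^+ 2) + (1 + 2 * c) / b * (2 / m).
Let C : R := 2 / b ^+ 2 * (c ^+ 2 + c * (2 / m)).
Let K : R := 4 * (A ^+ 3 * (Hs + hm) ^+ 2 + (5 * b) ^+ 3 * C ^+ 2).

Let A_ge0 : 0 <= A.
Proof.
have hm_inv : 0 <= 4 / hm ^+ 2 by rewrite divr_ge0 ?exprn_ge0 ?ltW.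
have m_inv : 0 <= 2 / m by rewrite divr_ge0 ?ltW.
have c_b : 0 <= (1 + 2 * c) / b by rewrite divr_ge0 ?ltW //; have := c_ge1; lra.
have Hs_b : 0 <= Hs + 5 * b by have := Hs_ge0; have := b_gt0; lra.
by apply: addr_ge0; apply: mulr_ge0.
Qed.

Let K_ge0 : 0 <= K.
Proof.
have b5_ge0 : 0 <= 5 * b by rewrite mulr_ge0 ?ltW.
by apply: mulr_ge0 => //; apply: addr_ge0; apply: mulr_ge0; rewrite ?sqr_ge0 ?exprn_ge0.
Qed.

Section Near.
Variable p : I -> R.
Hypotheses (p_ge0 : forall k, 0 <= p k) (p_sum1 : \sum_k p k = 1).
Hypothesis p_near : forall k, `|p k - ps k| <= delta.

Let d k := p k - ps k.
Let eps := lam_p a b p - lam_p a b ps.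
Let r k := b * d k - eps.
Let V := gnorm2_p a b p.
Let tau := \sum_(k | ~~ S k) p k.
Let tau0 := \sum_(k | ~~ S k && (h k == 0)) p k.
Let tau1 := \sum_(k | h k != 0) p k.
Let X := \sum_(k | S k) r k ^+ 2.
Let s := \sum_(k | S k) r k.

Let p_off_supp k : ~~ S k -> p k = d k.
Proof. by move=> /negPn /eqP ps0; rewrite /d ps0 subr0. Qed.

Let gap_near k : gap a b p k = h k + r k.
Proof. by rewrite /h /gap /r /d /eps; ring. Qed.

Let eps_sum : eps = \sum_k p k * (h k + b * d k).
Proof.
rewrite /eps [lam_p a b ps](_ : _ = \sum_k p k * lam_p a b ps); last first.
  by rewrite -mulr_suml p_sum1 mul1r.
rewrite lam_pE -sumrB.
by apply: eq_bigr => k _; rewrite /h /gap /d; ring.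
Qed.

Let eps_le : `|eps| <= (Hs + b) * delta.
Proof.
rewrite eps_sum; apply: (le_trans (ler_norm_sum _ _ _)).
have term k : `|p k * (h k + b * d k)| <= delta * `|h k| + b * delta * p k.
  rewrite mulrDr (le_trans (ler_normD _ _)) // lerD //.
    have [Sk | nSk] := boolP (S k).
      by rewrite gap_supp // mulr0 normr0 mulr_ge0 ?(ltW delta_gt0).
    by rewrite normrM p_off_supp // ler_wpM2r //; apply: p_near.
  rewrite normrM (ger0_norm (p_ge0 k)) normrM (gtr0_norm b_gt0) mulrC.
  by rewrite ler_wpM2r ?p_ge0 // ler_wpM2l ?(ltW b_gt0) ?p_near.
apply: (le_trans (ler_sum _ (fun k _ => term k))).
by rewrite big_split /= -!mulr_sumr p_sum1 mulr1 -/Hs; lra.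
Qed.

Let r_le k : `|r k| <= hm / 2.
Proof.
apply: le_trans (ler_normB _ _) _; rewrite normrM (gtr0_norm b_gt0).
have := ler_wpM2l (ltW b_gt0) (p_near k); have := eps_le; have := delta_le_hm; lra.
Qed.

Let V_eq : V = \sum_k (h k + r k) ^+ 2 * p k.
Proof. by apply: eq_bigr => k _; rewrite gap_near. Qed.

Let V_ge_sub (P : pred I) : \sum_(k | P k) (h k + r k) ^+ 2 * p k <= V.
Proof. by rewrite V_eq; apply: ler_sum_sub => // k _; rewrite mulr_ge0 ?sqr_ge0. Qed.

Let V_le : V <= (Hs + hm) ^+ 2.
Proof.
rewrite V_eq -[leRHS]mulr1 -p_sum1 mulr_sumr; apply: ler_sum => k _.
have hr_le : `|h k + r k| <= Hs + hm.
  have := ler_normD (h k) (r k); have := Hs_ge_gap k; have := r_le k; have := hm_gt0; lra.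
rewrite ler_wpM2r // -real_normK ?num_real //.
by rewrite lerXn2r ?nnegrE ?normr_ge0 ?(le_trans (normr_ge0 _) hr_le).
Qed.

Let tau1_le : tau1 <= 4 / hm ^+ 2 * V.
Proof.
suff : hm ^+ 2 / 4 * tau1 <= V.
  by rewrite -[4 / _]invf_div ler_pdivlMl // divr_gt0 ?exprn_gt0.
rewrite /tau1 mulr_sumr.
apply: le_trans (V_ge_sub (fun k => h k != 0)); apply: ler_sum => k hk.
have hr_ge : hm / 2 <= `|h k + r k|.
  have := lerB_normD (h k) (r k); have := gap_lb hk; have := r_le k; lra.
rewrite ler_wpM2r // -[(h k + r k) ^+ 2]real_normK ?num_real //.
have -> : hm ^+ 2 / 4 = (hm / 2) ^+ 2 by field.
by rewrite lerXn2r ?nnegrE ?normr_ge0 ?divr_ge0 ?(ltW hm_gt0).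
Qed.

Let X_le : X <= 2 / m * V.
Proof.
suff : m / 2 * X <= V by rewrite -[2 / _]invf_div ler_pdivlMl // divr_gt0.
rewrite /X mulr_sumr; apply: le_trans (V_ge_sub S); apply: ler_sum => k Sk.
rewrite gap_supp // add0r mulrC ler_wpM2l ?sqr_ge0 //.
have := p_near k; have := ps_lb Sk; have := delta_le_m; rewrite ler_norml; lra.
Qed.

Let sum_d : \sum_k d k = 0.
Proof. by rewrite sumrB p_sum1 ps_sum1 subrr. Qed.

Let sum_d_supp : \sum_(k | S k) d k = - tau.
Proof.
move: sum_d; rewrite (bigID S) /= (eq_bigr _ (fun k nSk => esym (p_off_supp nSk))) -/tau.
by move/eqP; rewrite addr_eq0 => /eqP.
Qed.

Let c_eps : c * eps = - (b * tau) - s.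
Proof.
have -> : s = b * \sum_(k | S k) d k - c * eps.
  by rewrite /s /r sumrB -mulr_sumr /c mulr_suml (eq_bigr _ (fun _ _ => mul1r eps)).
by rewrite sum_d_supp; ring.
Qed.

Let s_sqr_le : s ^+ 2 <= c * X.
Proof.
have := sqr_sum_mul_le S (fun=> 1) r; rewrite /s /c /X.
by under eq_bigr do rewrite mul1r; under [\sum_(k | S k) 1 ^+ 2]eq_bigr do rewrite expr1n.
Qed.

Let tau_ge0 : 0 <= tau.
Proof. exact: sumr_ge0. Qed.

Let tau0_le1 : tau0 <= 1.
Proof. by rewrite -p_sum1; apply: ler_sum_sub. Qed.

Let tau1_le1 : tau1 <= 1.
Proof. by rewrite -p_sum1; apply: ler_sum_sub. Qed.

Let tau_split : tau = tau0 + tau1.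
Proof.
rewrite /tau (bigID (fun k => h k == 0)) /=; congr (_ + _); apply: eq_bigl => k.
have [hk0 | hk] := eqVneq (h k) 0; first by rewrite andbF.
by rewrite andbT; apply/negP => /gap_supp /eqP; rewrite (negbTE hk).
Qed.

(* On the degenerate coordinates ([ps k = 0 = h k]) the gradient component is
   [r k = b p k - eps], and [c * eps = - (b * tau) - s] forces it to be of order [tau]. *)
Let tau0_mass_le : b ^+ 2 * tau ^+ 2 / 2 * tau0 - s ^+ 2 <= c ^+ 2 * V.
Proof.
have term k : ~~ S k && (h k == 0) ->
    (b ^+ 2 * tau ^+ 2 / 2 - s ^+ 2) * p k <= c ^+ 2 * ((h k + r k) ^+ 2 * p k).
  move=> /andP[nSk /eqP ->]; rewrite add0r [leRHS]mulrA ler_wpM2r // -[c ^+ 2 * _]exprMn.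
  have -> : c * r k = c * b * p k + b * tau + s.
    by rewrite /r mulrBr c_eps -(p_off_supp nSk); lra.
  set u := c * b * p k + b * tau.
  have bt_ge0 : 0 <= b * tau by rewrite mulr_ge0 ?(ltW b_gt0).
  have cbp_ge0 : 0 <= c * b * p k by rewrite !mulr_ge0 ?(ltW b_gt0) ?(le_trans ler01 c_ge1).
  have bt_le_u : (b * tau) ^+ 2 <= u ^+ 2 by rewrite lerXn2r ?nnegrE ?addr_ge0 // lerDr.
  by have := sqr_ge0 (u + 2 * s); move: bt_le_u; rewrite exprMn; lra.
have sum_le : (b ^+ 2 * tau ^+ 2 / 2 - s ^+ 2) * tau0 <= c ^+ 2 * V.
  rewrite /tau0 mulr_sumr (le_trans (ler_sum _ (fun k => term k))) //.
  by rewrite -mulr_sumr ler_wpM2l ?sqr_ge0 ?V_ge_sub.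
have : s ^+ 2 * tau0 <= s ^+ 2 by rewrite ler_piMr ?sqr_ge0 ?sumr_ge0.
by move: sum_le; rewrite mulrBl; lra.
Qed.

Let tau0_cube_le : tau0 ^+ 3 <= C * V.
Proof.
have tau0_le_tau : tau0 <= tau by rewrite tau_split lerDl sumr_ge0.
have tau0_ge0 : 0 <= tau0 by rewrite sumr_ge0.
have cube_le : tau0 ^+ 3 <= tau ^+ 2 * tau0.
  by rewrite exprSr ler_wpM2r // lerXn2r ?nnegrE.
apply: le_trans cube_le _; rewrite -(ler_pM2l (exprn_gt0 2 b_gt0)).
have -> : b ^+ 2 * (C * V) = 2 * ((c ^+ 2 + c * (2 / m)) * V).
  by rewrite /C; field; rewrite !gt_eqF.
have : c * X <= c * (2 / m * V) by rewrite ler_wpM2l ?(le_trans ler01 c_ge1).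
by have := tau0_mass_le; have := s_sqr_le; lra.
Qed.

Let fobj_p_diff :
  fobj_p a b p - fobj_p a b ps = \sum_k h k * p k + b / 2 * \sum_k d k ^+ 2.
Proof.
transitivity (\sum_k (h k * d k + b / 2 * d k ^+ 2 + lam_p a b ps * d k)).
  rewrite /fobj_p !mulr_sumr -!big_split /= -sumrB.
  by apply: eq_bigr => k _; rewrite /h /gap /d; lra.
rewrite !big_split /= -!mulr_sumr sum_d mulr0 addr0; congr (_ + _).
apply: eq_bigr => k _; rewrite /d mulrBr.
have [Sk | /negPn/eqP ->] := boolP (S k); first by rewrite gap_supp // !mul0r subr0.
by rewrite mulr0 subr0.
Qed.

Let sum_gap_le : `|\sum_k h k * p k| <= Hs * tau1.
Proof.
rewrite (bigID (fun k => h k != 0)) /= [X in _ + X]big1 ?addr0 => [|k /negPn/eqP ->]; last first.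
  by rewrite mul0r.
apply: le_trans (ler_norm_sum _ _ _) _; rewrite /tau1 mulr_sumr; apply: ler_sum => k _.
by rewrite normrM (ger0_norm (p_ge0 k)) ler_wpM2r.
Qed.

Let sum_d2_off_le : \sum_(k | ~~ S k) d k ^+ 2 <= tau ^+ 2.
Proof.
rewrite expr2 {2}/tau mulr_sumr; apply: ler_sum => k nSk.
rewrite -p_off_supp // expr2 mulrC ler_wpM2r //.
exact: ler_term_sum.
Qed.

Let sum_d2_supp_le : b ^+ 2 * \sum_(k | S k) d k ^+ 2 <= (2 + 4 * c) * X + 4 * b ^+ 2 * tau ^+ 2.
Proof.
have eps2_le : c * eps ^+ 2 <= 2 * b ^+ 2 * tau ^+ 2 + 2 * c * X.
  have : c * eps ^+ 2 <= (c * eps) ^+ 2.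
    by rewrite exprMn [leRHS]mulrC [leLHS]mulrC ler_wpM2l ?sqr_ge0 // ler_eXnr.
  by rewrite c_eps; have := sqr_ge0 (b * tau - s); have := s_sqr_le; lra.
have : b ^+ 2 * \sum_(k | S k) d k ^+ 2 <= \sum_(k | S k) (2 * r k ^+ 2 + 2 * eps ^+ 2 * 1).
  rewrite mulr_sumr; apply: ler_sum => k _.
  have -> : b ^+ 2 * d k ^+ 2 = (r k + eps) ^+ 2 by rewrite /r; lra.
  by have := sqr_ge0 (r k - eps); lra.
rewrite big_split /= -!mulr_sumr -/X -/c.
by move: eps2_le; lra.
Qed.

Let fobj_p_diff_le : `|fobj_p a b p - fobj_p a b ps| <= A * V + 5 * b * tau0 ^+ 2.
Proof.
have b2_gt0 : 0 < 2 * b by rewrite mulr_gt0.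
have supp_le : b / 2 * \sum_(k | S k) d k ^+ 2 <= (1 + 2 * c) / b * X + 2 * b * tau ^+ 2.
  rewrite -(ler_pM2l b2_gt0).
  have -> : 2 * b * (b / 2 * \sum_(k | S k) d k ^+ 2) = b ^+ 2 * \sum_(k | S k) d k ^+ 2.
    by field.
  have -> : 2 * b * ((1 + 2 * c) / b * X + 2 * b * tau ^+ 2) =
      (2 + 4 * c) * X + 4 * b ^+ 2 * tau ^+ 2 by field; rewrite gt_eqF.
  exact: sum_d2_supp_le.
have off_le : b / 2 * \sum_(k | ~~ S k) d k ^+ 2 <= b / 2 * tau ^+ 2.
  by rewrite ler_wpM2l ?divr_ge0 ?(ltW b_gt0).
have tau_sqr_le : tau ^+ 2 <= 2 * tau0 ^+ 2 + 2 * tau1.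
  have : tau1 ^+ 2 <= tau1 by rewrite expr2 ler_piMr ?sumr_ge0.
  by rewrite tau_split; have := sqr_ge0 (tau0 - tau1); lra.
have btau_sqr_le : b * tau ^+ 2 <= b * (2 * tau0 ^+ 2 + 2 * tau1).
  by rewrite ler_wpM2l ?(ltW b_gt0).
have tau1_V : (Hs + 5 * b) * tau1 <= (Hs + 5 * b) * (4 / hm ^+ 2 * V).
  by rewrite ler_wpM2l ?addr_ge0 ?Hs_ge0 ?mulr_ge0 ?(ltW b_gt0).
have X_V : (1 + 2 * c) / b * X <= (1 + 2 * c) / b * (2 / m * V).
  by rewrite ler_wpM2l ?divr_ge0 ?addr_ge0 ?mulr_ge0 ?(le_trans ler01 c_ge1) ?(ltW b_gt0).
rewrite fobj_p_diff; apply: le_trans (ler_normD _ _) _.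
have d2_ge0 : 0 <= \sum_k d k ^+ 2 by apply: sumr_ge0 => k _; apply: sqr_ge0.
rewrite [`|b / 2 * _|]ger0_norm; last by rewrite mulr_ge0 ?divr_ge0 ?(ltW b_gt0).
rewrite [X in b / 2 * X](bigID S) /= mulrDr.
by move: sum_gap_le; rewrite /A; lra.
Qed.

Lemma fobj_p_near_le : `|fobj_p a b p - fobj_p a b ps| ^+ 3 <= K * V ^+ 2.
Proof.
apply: expr3_le_of_bound fobj_p_diff_le tau0_cube_le => //.
- by rewrite mulr_ge0 ?(ltW b_gt0).
- exact: sumr_ge0.
- by rewrite V_le gnorm2_p_ge0.
Qed.

End Near.

Lemma fobj_p_local_bound : exists2 delta : R, 0 < delta & exists2 K : R, 0 < K &
  forall p, (forall k, 0 <= p k) -> \sum_k p k = 1 -> (forall k, `|p k - ps k| <= delta) ->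
  `|fobj_p a b p - fobj_p a b ps| ^+ 3 <= K * gnorm2_p a b p ^+ 2.
Proof.
exists delta => //; exists (K + 1) => [|p p_ge0 p_sum1 p_near].
  by have := K_ge0; lra.
apply: le_trans (fobj_p_near_le p_ge0 p_sum1 p_near) _.
by rewrite ler_wpM2r ?sqr_ge0 // lerDl.
Qed.

End LocalKL.

Lemma fobj_p_lojasiewicz (R : realFieldType) (I : finType) (a : I -> R) (b : R) (ps : I -> R) :
  0 < b -> (forall k, 0 <= ps k) -> \sum_k ps k = 1 ->
  (forall k, ps k != 0 -> gap a b ps k = 0) ->
  exists2 delta : R, 0 < delta & exists2 K : R, 0 < K &
  forall p, (forall k, 0 <= p k) -> \sum_k p k = 1 -> (forall k, `|p k - ps k| <= delta) ->
  `|fobj_p a b p - fobj_p a b ps| ^+ 3 <= K * gnorm2_p a b p ^+ 2.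
Proof.
move=> b_gt0 ps_ge0 ps_sum1 gap_supp.
have [m m_gt0 ps_lb] : exists2 m, 0 < m & forall k, ps k != 0 -> m <= ps k.
  by apply: exists_pos_lbound => k; rewrite lt_neqAle eq_sym ps_ge0 andbT.
have [hm hm_gt0 gap_lb] :
    exists2 hm, 0 < hm & forall k, gap a b ps k != 0 -> hm <= `|gap a b ps k|.
  by apply: exists_pos_lbound => k; rewrite normr_gt0.
exact: (fobj_p_local_bound b_gt0 ps_sum1 gap_supp m_gt0 ps_lb hm_gt0 gap_lb).
Qed.

Section Cabs2.
Variable R : realType.
Implicit Types (x : R) (w z : R[i]).

Lemma cabs2_ge0 w : 0 <= cabs2 w.
Proof. by rewrite addr_ge0 ?sqr_ge0. Qed.

Lemma cabs2_real x : cabs2 (x%:C)%C = x ^+ 2.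
Proof. by rewrite /cabs2 /= expr0n addr0. Qed.

Lemma cabs2_realM x w : cabs2 ((x%:C)%C * w) = x ^+ 2 * cabs2 w.
Proof. by case: w => u v; rewrite /cabs2 /=; ring. Qed.

Lemma sqr_cabs2B_le w z : cabs2 w <= 1 -> cabs2 z <= 1 ->
  (cabs2 w - cabs2 z) ^+ 2 <= 4 * cabs2 (w - z).
Proof.
case: w z => u v [x y]; rewrite /cabs2 /= => w_le1 z_le1.
have -> : u ^+ 2 + v ^+ 2 - (x ^+ 2 + y ^+ 2) = (u - x) * (u + x) + (v - y) * (v + y) by ring.
have cs : ((u - x) * (u + x) + (v - y) * (v + y)) ^+ 2 <=
    ((u - x) ^+ 2 + (v - y) ^+ 2) * ((u + x) ^+ 2 + (v + y) ^+ 2).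
  by have := sqr_ge0 ((u - x) * (v + y) - (v - y) * (u + x)); lra.
have sum_le : (u + x) ^+ 2 + (v + y) ^+ 2 <= 4.
  by have := sqr_ge0 (u - x); have := sqr_ge0 (v - y); lra.
by apply: le_trans cs _; rewrite mulrC ler_wpM2r // addr_ge0 ?sqr_ge0.
Qed.

End Cabs2.

Section SphereModel.
Variables (R : realType) (n : nat) (a : 'I_n -> R) (b : R).
Implicit Types y z : 'I_n -> R[i].

Lemma gvecE y k : gvec a b y k = ((gap a b (fun j => cabs2 (y j)) k)%:C)%C * y k.
Proof. by rewrite /gvec -rmorphD -rmorphB. Qed.

Lemma gradnormE y :
  gradnorm a b y = Num.sqrt 2 * Num.sqrt (gnorm2_p a b (fun k => cabs2 (y k))).
Proof.
by congr (_ * Num.sqrt _); apply: eq_bigr => k _; rewrite gvecE cabs2_realM.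
Qed.

Lemma stationary_gap z : stationary a b z ->
  forall k, cabs2 (z k) != 0 -> gap a b (fun j => cabs2 (z j)) k = 0.
Proof.
move=> [_ gvec0] k zk_neq0; move: (gvec0 k); rewrite gvecE => /eqP.
rewrite mulf_eq0 => /orP[/eqP/(congr1 (@complex.Re R)) // | /eqP zk0].
by move: zk_neq0; rewrite zk0 /cabs2 /= expr0n addr0 eqxx.
Qed.

Lemma cabs2_le1 y k : on_sphere y -> cabs2 (y k) <= 1.
Proof. by move=> <-; apply: ler_term_sum => // j _; apply: cabs2_ge0. Qed.

Lemma cabs2_near y z (e : R) : on_sphere y -> on_sphere z -> 0 <= e ->
  cnorm (fun k => y k - z k) < e / 2 -> forall k, `|cabs2 (y k) - cabs2 (z k)| <= e.
Proof.
move=> y1 z1 e_ge0 yz_lt k.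
have dist_ge0 : 0 <= \sum_j cabs2 (y j - z j) by apply: sumr_ge0 => j _; apply: cabs2_ge0.
have dist_lt : \sum_j cabs2 (y j - z j) < (e / 2) ^+ 2.
  by rewrite -(sqr_sqrtr dist_ge0) ltr_pXn2r ?nnegrE ?sqrtr_ge0 ?divr_ge0.
have yzk_le : cabs2 (y k - z k) <= \sum_j cabs2 (y j - z j).
  by apply: ler_term_sum => // j _; apply: cabs2_ge0.
have := sqr_cabs2B_le (cabs2_le1 k y1) (cabs2_le1 k z1).
rewrite -real_normK ?num_real // => sqr_le.
rewrite -(ler_pXn2r (_ : 0 < 2)%N) ?nnegrE //; lra.
Qed.

End SphereModel.

Lemma powR_quarter_le (R : realType) (x V K : R) :
  0 <= x -> 0 <= V -> 0 <= K -> x ^+ 3 <= K * V ^+ 2 ->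
  x `^ (1 - 4^-1) <= K `^ 4^-1 * Num.sqrt V.
Proof.
move=> x_ge0 V_ge0 K_ge0 x3_le.
rewrite -(@ler_pXn2r _ 4) ?nnegrE ?mulr_ge0 ?powR_ge0 ?sqrtr_ge0 //.
rewrite exprMn [Num.sqrt V ^+ 4](exprM _ 2 2) sqr_sqrtr // -!powR_mulrn ?powR_ge0 // -!powRrM.
rewrite mulVf ?pnatr_eq0 // powRr1 // (_ : (1 - 4^-1) * 4 = 3%:R); last by field.
by rewrite !powR_mulrn.
Qed.

Lemma KL_valid_quarter (R : realType) (n : nat) (a : 'I_n -> R) (b : R) :
  0 < b -> KL_valid a b 4^-1.
Proof.
move=> b_gt0; split => [|z z_stat]; first by apply/andP; split; lra.
have [delta delta_gt0 [K K_gt0 KL_p]] := fobj_p_lojasiewicz (a := a) b_gt0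
  (fun k => cabs2_ge0 (z k)) z_stat.1 (stationary_gap z_stat).
exists (delta / 2), (K `^ 4^-1); do 2?split; rewrite ?divr_gt0 ?powR_gt0 //.
move=> y y1 yz_lt; rewrite gradnormE.
have V_ge0 := gnorm2_p_ge0 a b (fun k => cabs2_ge0 (y k)).
apply: le_trans (powR_quarter_le (normr_ge0 _) V_ge0 (ltW K_gt0) _) _.
  exact: KL_p (fun k => cabs2_ge0 _) y1 (cabs2_near y1 z_stat.1 (ltW delta_gt0) yz_lt).
rewrite ler_wpM2l ?powR_ge0 // ler_peMl ?sqrtr_ge0 //.
by rewrite -[leLHS]sqrtr1 ler_wsqrtr // ler1n.
Qed.

Section SmallPowers.
Variable R : realType.

Lemma exists_small_powR (e M r : R) : 0 < e -> 0 < M -> 0 < r ->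
  exists2 t : R, 0 < t <= r & t `^ e < M.
Proof.
move=> e_gt0 M_gt0 r_gt0; pose t := Num.min r ((M / 2) `^ e^-1).
have t_gt0 : 0 < t by rewrite lt_min r_gt0 powR_gt0 ?divr_gt0.
exists t; first by rewrite t_gt0 ge_min lexx.
apply: le_lt_trans (_ : (M / 2) `^ e^-1 `^ e < M).
  by rewrite ge0_ler_powR ?nnegrE ?(ltW e_gt0) ?(ltW t_gt0) ?powR_ge0 // ge_min lexx orbT.
by rewrite -powRrM mulVf ?gt_eqF // powRr1 ?divr_ge0 ?ltW //; lra.
Qed.

Lemma sqr_powR_split (b t th : R) : 0 < b -> 0 < t ->
  ((b * t ^+ 2) `^ (1 - th)) ^+ 2 = b `^ (2 - 2 * th) * t ^+ 3 / t `^ (4 * th - 1).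
Proof.
move=> b_gt0 t_gt0.
rewrite -powR_mulrn ?powR_ge0 // -powRrM powRM ?(ltW b_gt0) ?sqr_ge0 //.
rewrite -powR_mulrn ?ltW // -powRrM -mulrA -powRN -powR_mulrn ?ltW // -powRD; last first.
  by rewrite (gt_eqF t_gt0) implybT.
by congr (_ `^ _ * _ `^ _); ring.
Qed.

Lemma exists_small_quarter_violation (b eta th r : R) :
  0 < b -> 0 < eta -> 4^-1 < th -> 0 < r ->
  exists2 t : R, 0 < t <= r & eta * Num.sqrt (8 * b ^+ 2 * t ^+ 3) < (b * t ^+ 2) `^ (1 - th).
Proof.
move=> b_gt0 eta_gt0 th_gt r_gt0; pose c8 := 8 * eta ^+ 2 * b ^+ 2.
have c8_gt0 : 0 < c8 by rewrite !mulr_gt0 ?exprn_gt0.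
have e_gt0 : 0 < 4 * th - 1 by lra.
have M_gt0 : 0 < b `^ (2 - 2 * th) / c8 by rewrite divr_gt0 ?powR_gt0.
have [t t_in te_lt] := exists_small_powR e_gt0 M_gt0 r_gt0.
exists t => //; have /andP[t_gt0 _] := t_in.
have bt3_ge0 : 0 <= 8 * b ^+ 2 * t ^+ 3.
  by rewrite mulr_ge0 ?exprn_ge0 ?(ltW t_gt0) // mulr_ge0 ?sqr_ge0.
rewrite -(@ltr_pXn2r _ 2) ?nnegrE ?powR_ge0 ?mulr_ge0 ?sqrtr_ge0 ?(ltW eta_gt0) //.
rewrite exprMn sqr_sqrtr //.
rewrite sqr_powR_split // ltr_pdivlMr ?powR_gt0 //.
by move: te_lt; rewrite ltr_pdivlMr // -(ltr_pM2r (exprn_gt0 3 t_gt0)) /c8; lra.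
Qed.

End SmallPowers.

Section Example.
Variables (R : realType) (n : nat) (b : R).
Hypotheses (n_ge2 : (2 <= n)%N) (b_gt0 : 0 < b).

Let i0 : 'I_n := Ordinal (ltnW n_ge2).
Let i1 : 'I_n := Ordinal n_ge2.

Let i1_neq_i0 : i1 != i0.
Proof. by []. Qed.

Let sum_pair (F : 'I_n -> R) : (forall k, k != i0 -> k != i1 -> F k = 0) ->
  \sum_k F k = F i0 + F i1.
Proof.
move=> F0; rewrite (bigD1 i0) //= (bigD1 i1) //= big1 ?addr0 // => k /andP[k0 k1].
exact: F0.
Qed.

Let a k : R := if k == i0 then 0 else 2 * b.

Let p (t : R) k : R := if k == i0 then 1 - t else if k == i1 then t else 0.

Let y (t : R) k : R[i] := ((Num.sqrt (p t k))%:C)%C.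

Let p_off (t : R) k : k != i0 -> k != i1 -> p t k = 0.
Proof. by rewrite /p => /negbTE -> /negbTE ->. Qed.

Let p_i0 (t : R) : p t i0 = 1 - t. Proof. by rewrite /p eqxx. Qed.
Let p_i1 (t : R) : p t i1 = t. Proof. by rewrite /p (negbTE i1_neq_i0) eqxx. Qed.
Let a_i0 : a i0 = 0. Proof. by rewrite /a eqxx. Qed.
Let a_i1 : a i1 = 2 * b. Proof. by rewrite /a (negbTE i1_neq_i0). Qed.

Let sum_p (t : R) (G : 'I_n -> R -> R) : (forall k, G k 0 = 0) ->
  \sum_k G k (p t k) = G i0 (1 - t) + G i1 t.
Proof.
by move=> G0; rewrite sum_pair ?p_i0 ?p_i1 // => k k0 k1; rewrite p_off.
Qed.

Let lam_p_p (t : R) : lam_p a b (p t) = b * t + b * ((1 - t) ^+ 2 + t ^+ 2).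
Proof.
rewrite /lam_p (@sum_p _ (fun k x => a k * x)) ?(@sum_p _ (fun _ x => x ^+ 2)) => [|k|k].
- by rewrite a_i0 a_i1; field.
- by rewrite expr0n.
- by rewrite mulr0.
Qed.

Let fobj_p_p (t : R) : fobj_p a b (p t) = b * t + b / 2 * ((1 - t) ^+ 2 + t ^+ 2).
Proof.
rewrite /fobj_p (@sum_p _ (fun k x => a k * x)) ?(@sum_p _ (fun _ x => x ^+ 2)) => [|k|k].
- by rewrite a_i0 a_i1; field.
- by rewrite expr0n.
- by rewrite mulr0.
Qed.

Let gap_p0 k : gap a b (p 0) k = 0.
Proof.
rewrite /gap lam_p_p /p /a; case: (k == i0); first by field.
by case: (k == i1); field.
Qed.

Let gnorm2_p_p (t : R) : gnorm2_p a b (p t) = 4 * b ^+ 2 * t ^+ 3 * (1 - t).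
Proof.
rewrite /gnorm2_p (@sum_p _ (fun k x => (2^-1 * a k + b * x - lam_p a b (p t)) ^+ 2 * x)).
  by rewrite lam_p_p a_i0 a_i1; field.
by move=> k; rewrite mulr0.
Qed.

Let cabs2_y (t : R) k : 0 <= t <= 1 -> cabs2 (y t k) = p t k.
Proof.
move=> /andP[t_ge0 t_le1]; rewrite cabs2_real sqr_sqrtr // /p.
by case: (k == i0); last case: (k == i1); rewrite ?subr_ge0.
Qed.

Let cabs2_yE (t : R) : 0 <= t <= 1 -> (fun k => cabs2 (y t k)) = p t.
Proof. by move=> t01; apply: boolp.funext => k; apply: cabs2_y. Qed.

Let y_sphere (t : R) : 0 <= t <= 1 -> on_sphere (y t).
Proof.
move=> t01; rewrite /on_sphere (eq_bigr _ (fun k _ => cabs2_y k t01)).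
by rewrite (@sum_p _ (fun _ x => x)) // subrK.
Qed.

Let y0_stationary : stationary a b (y 0).
Proof.
have t01 : 0 <= (0 : R) <= 1 by rewrite lexx ler01.
split=> [|k]; first exact: y_sphere.
by rewrite gvecE (cabs2_yE t01) gap_p0 mul0r.
Qed.

Let y_dist (t : R) : 0 <= t <= 1 -> cnorm (fun k => y t k - y 0 k) <= Num.sqrt (2 * t).
Proof.
move=> /andP[t_ge0 t_le1]; rewrite /cnorm ler_wsqrtr //.
rewrite (eq_bigr _ (fun k _ => congr1 (@cabs2 R) (esym (rmorphB _ _ _)))) /=.
rewrite sum_pair => [|k k0 k1]; last by rewrite !p_off // subrr cabs2_real expr0n.
rewrite !cabs2_real !p_i0 !p_i1 subr0 sqrtr1 sqrtr0 subr0 sqr_sqrtr //.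
set s : R := Num.sqrt (1 - t).
have s_ge0 : 0 <= s := sqrtr_ge0 _.
have s_sqr : s ^+ 2 = 1 - t by rewrite sqr_sqrtr ?subr_ge0.
have s_le1 : s <= 1 by rewrite -sqrtr1 ler_wsqrtr // lerBlDr lerDl.
have : 0 <= s * (1 - s) by rewrite mulr_ge0 ?subr_ge0.
lra.
Qed.

Let fobj_y (t : R) : 0 <= t <= 1 -> fobj a b (y t) - fobj a b (y 0) = b * t ^+ 2.
Proof.
move=> t01; have t0 : 0 <= (0 : R) <= 1 by rewrite lexx ler01.
have -> : fobj a b (y t) = fobj_p a b (p t) by rewrite -(cabs2_yE t01).
have -> : fobj a b (y 0) = fobj_p a b (p 0) by rewrite -(cabs2_yE t0).
by rewrite !fobj_p_p; field.
Qed.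

Let gradnorm_y_le (t : R) : 0 <= t <= 1 -> gradnorm a b (y t) <= Num.sqrt (8 * b ^+ 2 * t ^+ 3).
Proof.
move=> t01; have /andP[t_ge0 t_le1] := t01.
rewrite gradnormE (cabs2_yE t01) gnorm2_p_p -sqrtrM // ler_wsqrtr //.
have bt3_ge0 : 0 <= b ^+ 2 * t ^+ 3 := mulr_ge0 (sqr_ge0 b) (exprn_ge0 3 t_ge0).
by have := mulr_ge0 bt3_ge0 t_ge0; lra.
Qed.

Lemma KL_exponent_quarter : exists a : 'I_n -> R, KL_exponent_is a b 4^-1.
Proof.
exists a; split; first exact: KL_valid_quarter.
move=> th [_ valid]; rewrite leNgt; apply/negP => th_gt.
have [delta [eta [delta_gt0 [eta_gt0 KL]]]] := valid _ y0_stationary.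
have r_gt0 : 0 < Num.min 2^-1 (delta ^+ 2 / 4) by rewrite lt_min divr_gt0 ?exprn_gt0 //; lra.
have [t /andP[t_gt0]] := exists_small_quarter_violation b_gt0 eta_gt0 th_gt r_gt0.
rewrite le_min => /andP[t_le_half t_le_delta] violation.
have t01 : 0 <= t <= 1 by apply/andP; split; lra.
have dist : cnorm (fun k => y t k - y 0 k) < delta.
  apply: le_lt_trans (y_dist t01) _.
  rewrite -(@ltr_pXn2r _ 2) ?nnegrE ?sqrtr_ge0 ?(ltW delta_gt0) // sqr_sqrtr; lra.
have := KL _ (y_sphere t01) dist; rewrite fobj_y // ger0_norm; last first.
  by rewrite mulr_ge0 ?sqr_ge0 ?ltW.
move/le_trans/(_ (ler_wpM2l (ltW eta_gt0) (gradnorm_y_le t01))).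
by rewrite leNgt violation.
Qed.

End Example.

Theorem theorem15 :
  (forall (R : realType) (n : nat) (a : 'I_n -> R) (beta : R),
      0 < beta -> KL_valid a beta (4^-1))
  /\
  (forall (R : realType) (n : nat) (beta : R),
      (2 <= n)%N -> 0 < beta ->
      exists a : 'I_n -> R, KL_exponent_is a beta (4^-1)).
Proof.
split=> [R n a beta beta_gt0 | R n beta n_ge2 beta_gt0].
- exact: KL_valid_quarter.
- exact: KL_exponent_quarter.
Qed.
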